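(* Let $W_n$ ($n\ge4$) be the wheel graph (a cycle on $n-1$ vertices plus a vertex adjacent to all of them) with any finite initial configuration, and let $u,v$ be adjacent vertices of degree $3$. For every integer $t\geq0$: (a) if $|c_t(u)-c_t(v)|<3$ then $|c_{t+1}(u)-c_{t+1}(v)|\leq 6$; (b) if $|c_t(u)-c_t(v)|\geq 3$ then $|c_{t+1}(u)-c_{t+1}(v)|\leq |c_t(u)-c_t(v)|$.
   Context: Diffusion process: for a configuration $c_t:V(G)\to\mathbb{Z}$, $c_{t+1}(w)=c_t(w)-|\{x\in N(w): c_t(w)>c_t(x)\}|+|\{x\in N(w): c_t(w)<c_t(x)\}|$ for all $w$ simultaneously. *)

From mathcomp Require Import all_boot all_order all_algebra.
Set Implicit Arguments. Unset Strict Implicit. Unset Printing Implicit Defensive.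
Import Order.TTheory GRing.Theory Num.Theory.

(* Wheel graph W_n on vertex set 'I_n: vertex 0 is the hub, vertices
   1, ..., n-1 form a cycle (i adjacent to i+1, and n-1 adjacent to 1). *)
Definition rim_adj (n i j : nat) : bool :=
  let m := n.-1 in ((i.-1).+1 %% m == j.-1) || ((j.-1).+1 %% m == i.-1).

Definition wheel_adj (n : nat) (x y : 'I_n) : bool :=
  (x != y) && [|| (val x == 0), (val y == 0) | rim_adj n (val x) (val y)].

Definition wdeg (n : nat) (x : 'I_n) : nat := #|[set y | wheel_adj x y]|.

Local Open Scope ring_scope.

Definition diffuse (n : nat) (c : 'I_n -> int) : 'I_n -> int :=
  fun w => c w - (#|[set x | wheel_adj w x & c x < c w]|)%:Z
               + (#|[set x | wheel_adj w x & c w < c x]|)%:Z.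

Definition config (n : nat) (c0 : 'I_n -> int) (t : nat) : 'I_n -> int :=
  iter t (@diffuse n) c0.

(* One diffusion step adds to [c w] the sum, over the neighbours [x] of [w], of
   [sgz (c x - c w)].  Two adjacent vertices [u], [v] of the wheel always have a
   common neighbour [h], so when both have degree 3 the step of each is its
   term towards the other, its term towards [h], and one remaining term of
   absolute value at most 1.  Comparing these terms bounds the new gap. *)

From mathcomp Require Import all_boot all_order all_algebra.
From mathcomp Require Import zify.
Import Order.TTheory GRing.Theory Num.Theory.
Set Implicit Arguments. Unset Strict Implicit. Unset Printing Implicit Defensive.

Lemma wheel_adj_sym n : symmetric (@wheel_adj n).
Proof.
move=> x y; rewrite /wheel_adj /rim_adj eq_sym.
by rewrite orbCA (orbC (_ %% _ == (val y).-1)).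
Qed.

Lemma wheel_adj_neq n (x y : 'I_n) : wheel_adj x y -> x != y.
Proof. by case/andP. Qed.

Lemma wdegE n (w : 'I_n) : wdeg w = #|wheel_adj w|.
Proof. by apply: eq_card => x; rewrite inE. Qed.

Lemma wheel_adj_hub n (x y : 'I_n) : val x = 0 -> val y != 0 -> wheel_adj x y.
Proof.
move=> x0 y0; rewrite /wheel_adj x0 eqxx andbT.
by apply: contra y0 => /eqP <-; rewrite x0.
Qed.

Lemma wheel_rim_nbr n (v : 'I_n) : (3 <= n)%N -> val v != 0 ->
  exists2 w : 'I_n, val w != 0 & wheel_adj v w.
Proof.
move=> n3 v0; have vn : (val v < n)%N := ltn_ord v.
have vmod : (val v %% n.-1 < n.-1)%N by rewrite ltn_mod; lia.
have wn : ((val v %% n.-1).+1 < n)%N by lia.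
exists (Ordinal wn) => //=.
have wv : (val v %% n.-1).+1 != val v.
  case: (ltnP (val v) n.-1) => [lt|ge]; first by rewrite modn_small //; lia.
  have -> : val v = n.-1 by lia.
  rewrite modnn; lia.
rewrite /wheel_adj /rim_adj /= -(inj_eq val_inj) /= eq_sym wv.
by rewrite prednK ?lt0n // eqxx !orbT.
Qed.

Lemma wheel_common_nbr n (u v : 'I_n) : (3 <= n)%N -> wheel_adj u v ->
  exists h, wheel_adj u h && wheel_adj v h.
Proof.
move=> n3 uv; have neq_uv : val u != val v := wheel_adj_neq uv.
have [u0|u0] := eqVneq (val u) 0.
  have v0 : val v != 0 by rewrite -u0 eq_sym.
  have [w w0 vw] := wheel_rim_nbr n3 v0.
  by exists w; rewrite vw wheel_adj_hub.
have [v0|v0] := eqVneq (val v) 0.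
  have [w w0 uw] := wheel_rim_nbr n3 u0.
  by exists w; rewrite uw wheel_adj_hub.
have n0 : (0 < n)%N by lia.
exists (Ordinal n0).
by rewrite !(wheel_adj_sym _ (Ordinal n0)) !wheel_adj_hub.
Qed.

Local Open Scope ring_scope.

(* [cmpz a x = sgz (x - a)], spelled out with boolean comparisons so that [lia] can reason about it. *)
Definition cmpz (a x : int) : int := (a < x)%R%:Z - (x < a)%R%:Z.

Lemma norm_cmpz_le1 (a x : int) : `|cmpz a x| <= 1.
Proof. rewrite /cmpz; lia. Qed.

Lemma cardz_sum_cond (T : finType) (A P : pred T) :
  (#|[set x | A x & P x]|)%:Z = \sum_(x | A x) (P x)%:Z.
Proof.
rewrite -(big_morph Posz PoszD (erefl 0%:Z)) -sum1_card; congr Posz.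
rewrite (eq_bigl (fun x => A x && P x)) => [|x]; last by rewrite inE.
by rewrite big_mkcondr; apply: eq_bigr => x _; case: (P x).
Qed.

Lemma diffuseE n (c : 'I_n -> int) (w : 'I_n) :
  diffuse c w = c w + \sum_(x | wheel_adj w x) cmpz (c w) (c x).
Proof.
by rewrite /diffuse !cardz_sum_cond sumrB addrAC -addrA.
Qed.

Lemma norm_sum_card3_rem (T : finType) (A : {pred T}) (F : T -> int) (p q : T) :
  #|A| = 3%N -> p \in A -> q \in A -> p != q -> (forall x, `|F x| <= 1) ->
  `|\sum_(x in A) F x - F p - F q| <= 1.
Proof.
move=> A3 Ap Aq pq F1.
rewrite (bigD1 p) //= (bigD1 q) /=; last by rewrite Aq eq_sym.
rewrite (addrC (F p)) addrK (addrC (F q)) addrK.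
apply: le_trans (ler_norm_sum _ _ _) _.
apply: le_trans (ler_sum _ (fun i _ => F1 i)) _.
have rest1 : #|[predD1 [predD1 A & p] & q]| = 1%N.
  by move: A3; rewrite (cardD1 p) (cardD1 q [predD1 A & p]) Ap !inE Aq eq_sym pq => -[].
rewrite sumr_const (eq_card (B := [predD1 [predD1 A & p] & q])) ?rest1 // => x.
by rewrite unfold_in !inE andbC (andbC (x \in A)).
Qed.

Lemma norm_flow_deg3_rem n (c : 'I_n -> int) (w x y : 'I_n) :
  wdeg w = 3%N -> wheel_adj w x -> wheel_adj w y -> x != y ->
  `|\sum_(z | wheel_adj w z) cmpz (c w) (c z) - cmpz (c w) (c x) - cmpz (c w) (c y)| <= 1.
Proof.
rewrite wdegE => w3 wx wy xy.
by apply: norm_sum_card3_rem => // z; apply: norm_cmpz_le1.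
Qed.

(* The common neighbour [h] cannot widen the gap, as [cmpz a h - cmpz b h] has the
   sign of [b - a]; the mutual terms close it by 2, which absorbs the two remainders. *)
Lemma gap_after_step (a b h su sv : int) :
  `|su - cmpz a b - cmpz a h| <= 1 -> `|sv - cmpz b a - cmpz b h| <= 1 ->
  (`|a - b| < 3 -> `|(a + su) - (b + sv)| <= 6) /\
  (3 <= `|a - b| -> `|(a + su) - (b + sv)| <= `|a - b|).
Proof. rewrite /cmpz; lia. Qed.

Theorem lemma8 (n : nat) (hn : (4 <= n)%N) (c0 : 'I_n -> int) (u v : 'I_n)
    (huv : wheel_adj u v) (hu : wdeg u = 3%N) (hv : wdeg v = 3%N) (t : nat) :
  (`|config c0 t u - config c0 t v| < 3 ->
     `|config c0 t.+1 u - config c0 t.+1 v| <= 6) /\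
  (3 <= `|config c0 t u - config c0 t v| ->
     `|config c0 t.+1 u - config c0 t.+1 v| <= `|config c0 t u - config c0 t v|).
Proof.
rewrite [config c0 t.+1]/config iterS -/(config c0 t) !diffuseE.
move: (config c0 t) => c.
have [h /andP[uh vh]] := wheel_common_nbr (ltnW hn) huv.
have vu : wheel_adj v u by rewrite wheel_adj_sym.
by apply: (gap_after_step (h := c h)); apply: norm_flow_deg3_rem => //; apply: wheel_adj_neq.
Qed.
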